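(* Let $M,N\ge 0$ be integers, $a_0,\dots,a_M\in\mathbb{R}$, $f_M(x)=\sum_{m=0}^M a_mT_m(x)$. For $0\le n\le N$ and $y\in[-1,1]$ let $\tilde R_n(y)=\int_{-1}^{y}f_M(y-1-t)T_n(t)\,\mathrm{d}t=\sum_{k=0}^{M+N+1}R_{k,n}T_k(y)$, and set $R_{M+N+2,n}:=0$. For $k\ge1$ let $\varepsilon_k=2$ if $k=1$ and $\varepsilon_k=1$ if $k\ge 2$. Then for every $1\le k\le M+N$: $$R_{k,1}=-R_{k,0}+\frac{\varepsilon_k}{2k}R_{k-1,0}-\frac{1}{2k}R_{k+1,0}\qquad(\text{if } N\ge1),$$ $$R_{k,2}=R_{k,0}+\frac{2\varepsilon_k}{k}R_{k-1,1}-\frac{2}{k}R_{k+1,1}\qquad(\text{if } N\ge2),$$ and for $2\le n\le N-1$, $$R_{k,n+1}=\frac{2(-1)^n}{n-1}R_{k,0}+\frac{n+1}{n-1}R_{k,n-1}+\frac{\varepsilon_k(n+1)}{k}R_{k-1,n}-\frac{n+1}{k}R_{k+1,n}.$$ Moreover, for every $1\le n\le N$, $$R_{0,n}=\sum_{j=1}^{M+n+1}(-1)^{j+1}R_{j,n}.$$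
   Context: $T_m(x)=\cos(m\arccos x)$ is the $m$-th Chebyshev polynomial. Each $\tilde R_n$ is a polynomial of degree at most $M+n+1$, so $R_{k,n}=0$ for $k>M+n+1$; $R$ is the $(M+N+2)\times(N+1)$ Chebyshev convolution matrix of $f_M$. *)

From Stdlib Require Import Reals Lra Lia.
From Coquelicot Require Import Coquelicot.
Open Scope R_scope.

Definition T (m : nat) (x : R) : R := cos (INR m * acos x).

Definition fM (M : nat) (a : nat -> R) (x : R) : R :=
  sum_f_R0 (fun m => a m * T m x) M.

Definition Rtilde (M : nat) (a : nat -> R) (n : nat) (y : R) : R :=
  RInt (fun t => fM M a (y - 1 - t) * T n t) (-1) y.

Definition eps (k : nat) : R := if Nat.eqb k 1 then 2 else 1.

(* Differentiating [Rtilde_n] in [y] under the integral sign and integrating by parts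
   gives [Rtilde_n' = (-1)^n f_M + int_{-1}^y f_M(y-1-t) T_n'(t) dt]; in particular
   [f_M = Rtilde_0'].  The derivative recurrences [T_1' = T_0], [T_2' = 4 T_1] and
   [T_(n+1)' = (n+1)/(n-1) T_(n-1)' + 2(n+1) T_n] thus become identities
   [sum_k d_k T_k' = sum_k b_k T_k] on (-1,1), whose coefficients satisfy
   [k d_k = (eps_k b_(k-1) - b_(k+1))/2]: put [y = cos t], multiply by [sin t sin (k t)]
   and integrate over [0, pi].  Induction on [n] with the same recurrences gives
   [R_(k,n) = 0] for [k > M+n+1], and the formula for [R_(0,n)] is [Rtilde_n(-1) = 0]
   read through [T_k(-1) = (-1)^k]. *)

From Stdlib Require Import Reals Lra Lia.
From Coquelicot Require Import Coquelicot.
Open Scope R_scope.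

Lemma nat_ind2 (P : nat -> Prop) :
  P 0%nat -> P 1%nat -> (forall n, P n -> P (S n) -> P (S (S n))) -> forall n, P n.
Proof.
  intros H0 H1 HS n. enough (P n /\ P (S n)) by tauto.
  induction n as [|n [IHn IHSn]]; auto.
Qed.

Lemma continuous_of_ex_derive (f : R -> R) x : (forall x, ex_derive f x) -> continuous f x.
Proof. intros Hf. apply (@ex_derive_continuous R_AbsRing R_NormedModule), Hf. Qed.

(* [T] equals [cos (m acos x)] only on [-1,1]; the derivative and integral lemmas
   need the polynomials given by the three-term recurrence on all of [R]. *)
Fixpoint cheb (n : nat) (x : R) : R :=
  match n with
  | O => 1
  | S O => x
  | S ((S m) as p) => 2 * x * cheb p x - cheb m x
  end.

Fixpoint chebU (n : nat) (x : R) : R :=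
  match n with
  | O => 1
  | S O => 2 * x
  | S ((S m) as p) => 2 * x * chebU p x - chebU m x
  end.

Definition dcheb (n : nat) (x : R) : R := INR n * chebU (pred n) x.

Lemma cheb_SS n x : cheb (S (S n)) x = 2 * x * cheb (S n) x - cheb n x.
Proof. reflexivity. Qed.

Lemma chebU_SS n x : chebU (S (S n)) x = 2 * x * chebU (S n) x - chebU n x.
Proof. reflexivity. Qed.

Lemma cheb_chebU n x : cheb (S n) x = chebU (S n) x - x * chebU n x.
Proof.
  revert n; apply nat_ind2; [simpl; ring | simpl; ring |].
  intros n IH1 IH2. rewrite cheb_SS, IH1, IH2, !chebU_SS. ring.
Qed.

Lemma cheb_cos n t : cheb n (cos t) = cos (INR n * t).
Proof.
  revert n; apply nat_ind2.
  - simpl. rewrite Rmult_0_l, cos_0. reflexivity.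
  - simpl. rewrite Rmult_1_l. reflexivity.
  - intros n IH1 IH2. rewrite cheb_SS, IH1, IH2.
    replace (INR (S (S n)) * t) with (INR (S n) * t + t) by (rewrite !S_INR; ring).
    replace (INR n * t) with (INR (S n) * t - t) by (rewrite !S_INR; ring).
    rewrite cos_plus, cos_minus. ring.
Qed.

Lemma chebU_cos_sin n t : chebU n (cos t) * sin t = sin (INR (S n) * t).
Proof.
  revert n; apply nat_ind2.
  - simpl. rewrite !Rmult_1_l. reflexivity.
  - simpl. replace ((1 + 1) * t) with (t + t) by ring. rewrite sin_plus. ring.
  - intros n IH1 IH2.
    rewrite chebU_SS, Rmult_minus_distr_r, !Rmult_assoc, IH1, IH2.
    replace (INR (S (S (S n))) * t) with (INR (S (S n)) * t + t) by (rewrite !S_INR; ring).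
    replace (INR (S n) * t) with (INR (S (S n)) * t - t) by (rewrite !S_INR; ring).
    rewrite sin_plus, sin_minus. ring.
Qed.

Lemma dcheb_cos_sin n t : dcheb n (cos t) * sin t = INR n * sin (INR n * t).
Proof.
  destruct n as [|n]; unfold dcheb.
  - simpl. ring.
  - simpl pred. rewrite Rmult_assoc, chebU_cos_sin. reflexivity.
Qed.

Lemma cheb_m1 n : cheb n (-1) = (-1) ^ n.
Proof.
  revert n; apply nat_ind2; [reflexivity | simpl; ring |].
  intros n IH1 IH2. rewrite cheb_SS, IH1, IH2. simpl. ring.
Qed.

Lemma T_cheb n x : -1 <= x <= 1 -> T n x = cheb n x.
Proof. intros Hx. unfold T. rewrite <- (cos_acos x Hx) at 2. apply eq_sym, cheb_cos. Qed.

Lemma is_derive_cheb n x : is_derive (cheb n) x (dcheb n x).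
Proof.
  revert n; apply nat_ind2; unfold dcheb.
  - simpl. rewrite Rmult_0_l. apply (is_derive_const 1).
  - simpl. rewrite Rmult_1_l. apply (@is_derive_id R_AbsRing).
  - intros n IH1 IH2.
    eapply is_derive_ext. { intros t. symmetry. apply cheb_SS. }
    replace (INR (S (S n)) * chebU (pred (S (S n))) x)
      with (2 * cheb (S n) x + 2 * x * dcheb (S n) x - dcheb n x).
    + apply (is_derive_minus (fun x => 2 * x * cheb (S n) x)); [|exact IH1].
      apply (is_derive_mult (fun x => 2 * x)); [| exact IH2 | exact Rmult_comm].
      auto_derive; [auto | ring].
    + unfold dcheb. destruct n as [|n]; simpl pred.
      * simpl. ring.
      * rewrite cheb_chebU, !chebU_SS, !S_INR. ring.
Qed.

Lemma continuous_cheb n x : continuous (cheb n) x.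
Proof. apply continuous_of_ex_derive. intros y. eexists. apply is_derive_cheb. Qed.

Lemma continuous_chebU n x : continuous (chebU n) x.
Proof.
  revert n; apply nat_ind2.
  - apply continuous_const.
  - apply continuous_of_ex_derive. intros y. simpl. auto_derive. auto.
  - intros n IH1 IH2.
    apply (continuous_ext (fun x => minus (mult (2 * x) (chebU (S n) x)) (chebU n x))).
    { intros; reflexivity. }
    apply (@continuous_minus R_UniformSpace R_AbsRing R_NormedModule); [|exact IH1].
    apply (@continuous_mult R_UniformSpace R_AbsRing); [|exact IH2].
    apply continuous_of_ex_derive. intros y. auto_derive. auto.
Qed.

Lemma continuous_dcheb n x : continuous (dcheb n) x.
Proof.
  apply (@continuous_mult R_UniformSpace R_AbsRing).
  - apply continuous_const.
  - apply continuous_chebU.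
Qed.

Lemma dcheb_0 t : dcheb 0 t = 0.
Proof. unfold dcheb. simpl. ring. Qed.

Lemma dcheb_1 t : dcheb 1 t = cheb 0 t.
Proof. unfold dcheb. simpl. ring. Qed.

Lemma dcheb_2 t : dcheb 2 t = 4 * cheb 1 t.
Proof. unfold dcheb. simpl. ring. Qed.

Lemma dcheb_succ n t : (2 <= n)%nat ->
  dcheb (S n) t = (INR n + 1) / (INR n - 1) * dcheb (n - 1) t + 2 * (INR n + 1) * cheb n t.
Proof.
  intros Hn. destruct n as [|[|n]]; try lia.
  unfold dcheb. replace (S (S n) - 1)%nat with (S n) by lia. simpl pred.
  rewrite cheb_chebU, !chebU_SS, !S_INR.
  assert (0 <= INR n) by apply pos_INR.
  field. lra.
Qed.

Lemma dcheb_succ_ex n : exists m al be, (m <= n)%nat /\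
  forall t, dcheb (S n) t = al * dcheb m t + be * cheb n t.
Proof.
  destruct (Nat.le_gt_cases 2 n) as [Hn|Hn].
  - exists (n - 1)%nat, ((INR n + 1) / (INR n - 1)), (2 * (INR n + 1)).
    split; [lia|]. intros t. apply dcheb_succ, Hn.
  - destruct n as [|[|n]]; try lia.
    + exists 0%nat, 0, 1. split; [lia|]. intros t. rewrite dcheb_1. ring.
    + exists 0%nat, 0, 4. split; [lia|]. intros t. rewrite dcheb_2. ring.
Qed.

Definition cheb_sum (K : nat) (c : nat -> R) (y : R) : R :=
  sum_f_R0 (fun k => c k * cheb k y) K.

Definition dcheb_sum (K : nat) (c : nat -> R) (y : R) : R :=
  sum_f_R0 (fun k => c k * dcheb k y) K.

Lemma continuous_sum_f_R0 (g : nat -> R -> R) K x :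
  (forall k, continuous (g k) x) -> continuous (fun y => sum_f_R0 (fun k => g k y) K) x.
Proof.
  intros Hg. induction K as [|K IH]; [apply Hg|].
  apply (@continuous_plus R_UniformSpace R_AbsRing R_NormedModule); [exact IH | apply Hg].
Qed.

Lemma is_derive_cheb_sum K c y : is_derive (cheb_sum K c) y (dcheb_sum K c y).
Proof.
  induction K as [|K IH]; unfold cheb_sum, dcheb_sum; simpl.
  - apply is_derive_scal, is_derive_cheb.
  - apply (is_derive_plus _ (fun y => c (S K) * cheb (S K) y)); [exact IH|].
    apply is_derive_scal, is_derive_cheb.
Qed.

Lemma continuous_dcheb_sum K c x : continuous (dcheb_sum K c) x.
Proof.
  apply continuous_sum_f_R0. intros k.
  apply (@continuous_mult R_UniformSpace R_AbsRing); [apply continuous_const | apply continuous_dcheb].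
Qed.

Lemma cheb_sum_scal K c s y : cheb_sum K (fun k => s * c k) y = s * cheb_sum K c y.
Proof. unfold cheb_sum. rewrite scal_sum. apply sum_eq. intros; ring. Qed.

Lemma dcheb_sum_plus_scal K c1 c2 s y :
  dcheb_sum K (fun k => c1 k + s * c2 k) y = dcheb_sum K c1 y + s * dcheb_sum K c2 y.
Proof. unfold dcheb_sum. rewrite scal_sum, <- sum_plus. apply sum_eq. intros; ring. Qed.

Definition trunc (K : nat) (c : nat -> R) (i : nat) : R := if Nat.leb i K then c i else 0.

Definition kron (i j : nat) : R := if Nat.eqb i j then 1 else 0.

Lemma trunc_le K c i : (i <= K)%nat -> trunc K c i = c i.
Proof. intros H. unfold trunc. apply Nat.leb_le in H. rewrite H. reflexivity. Qed.

Lemma trunc_zero K c i : ((i <= K)%nat -> c i = 0) -> trunc K c i = 0.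
Proof. intros H. unfold trunc. destruct (Nat.leb_spec i K); auto. Qed.

Lemma trunc_scal K c s i : trunc K (fun k => s * c k) i = s * trunc K c i.
Proof. unfold trunc. destruct (Nat.leb i K); ring. Qed.

Lemma sum_kron (g : nat -> R) K i : sum_f_R0 (fun k => g k * kron k i) K = trunc K g i.
Proof.
  unfold trunc, kron. induction K as [|K IH]; cbn [sum_f_R0].
  - destruct (Nat.eqb_spec 0 i), (Nat.leb_spec i 0); subst; try lia; ring.
  - rewrite IH.
    destruct (Nat.eqb_spec (S K) i), (Nat.leb_spec i K), (Nat.leb_spec i (S K));
      subst; try lia; ring.
Qed.

Lemma sum_f_R0_trunc (g : nat -> R) p d :
  (forall i, (p < i <= p + d)%nat -> g i = 0) -> sum_f_R0 g (p + d) = sum_f_R0 g p.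
Proof.
  induction d as [|d IH]; intros H.
  - rewrite Nat.add_0_r. reflexivity.
  - rewrite Nat.add_succ_r. simpl. rewrite (H (S (p + d))) by lia.
    rewrite Rplus_0_r. apply IH. intros i Hi. apply H. lia.
Qed.

Lemma RInt_ext_R (f g : R -> R) a b : (forall x, f x = g x) -> (RInt f a b : R) = RInt g a b.
Proof. intros H. apply RInt_ext. intros x _. apply H. Qed.

Lemma is_RInt_sum_f_R0 (g : nat -> R -> R) K a b : (forall k, ex_RInt (g k) a b) ->
  is_RInt (fun x => sum_f_R0 (fun k => g k x) K) a b (sum_f_R0 (fun k => RInt (g k) a b) K).
Proof.
  intros Hg. induction K as [|K IH]; simpl.
  - apply (RInt_correct (V := R_CompleteNormedModule)), Hg.
  - apply (is_RInt_plus (V := R_NormedModule)); [exact IH|].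
    apply (RInt_correct (V := R_CompleteNormedModule)), Hg.
Qed.

Lemma ex_RInt_of_ex_derive (f : R -> R) a b : (forall x, ex_derive f x) -> ex_RInt f a b.
Proof.
  intros Hf. apply (@ex_RInt_continuous R_CompleteNormedModule).
  intros x _. apply continuous_of_ex_derive, Hf.
Qed.

Lemma RInt_lin (f g : R -> R) (al be a b : R) :
  (forall x, ex_derive f x) -> (forall x, ex_derive g x) ->
  (RInt (fun t => al * f t + be * g t) a b : R) = al * RInt f a b + be * RInt g a b.
Proof.
  intros Hf Hg. apply (is_RInt_unique (V := R_CompleteNormedModule)).
  apply (is_RInt_plus (V := R_NormedModule) (fun t => scal al (f t)) (fun t => scal be (g t)));
    apply (is_RInt_scal (V := R_NormedModule)), (RInt_correct (V := R_CompleteNormedModule));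
    apply ex_RInt_of_ex_derive; assumption.
Qed.

Lemma RInt_scal_R (g : R -> R) s a b :
  ex_RInt g a b -> (RInt (fun t => s * g t) a b : R) = s * RInt g a b.
Proof. apply (RInt_scal (V := R_CompleteNormedModule)). Qed.

Lemma sin_INR_PI n : sin (INR n * PI) = 0.
Proof.
  induction n as [|n IH]; [rewrite Rmult_0_l; apply sin_0|].
  rewrite S_INR, Rmult_plus_distr_r, Rmult_1_l, sin_plus, IH, sin_PI. ring.
Qed.

Lemma RInt_cos_INR m : (RInt (fun t => cos (INR m * t)) 0 PI : R) = if Nat.eqb m 0 then PI else 0.
Proof.
  destruct (Nat.eqb_spec m 0) as [->|Hm].
  - rewrite (RInt_ext_R _ (fun _ => 1)).
    + rewrite (RInt_const (V := R_CompleteNormedModule)).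
      unfold scal; simpl; unfold mult; simpl. ring.
    + intros t. rewrite Rmult_0_l. apply cos_0.
  - apply not_0_INR in Hm.
    apply (is_RInt_unique (V := R_CompleteNormedModule)).
    replace 0 with (minus (sin (INR m * PI) / INR m) (sin (INR m * 0) / INR m)) at 2
      by (rewrite sin_INR_PI, Rmult_0_r, sin_0; unfold minus, plus, opp; simpl; field; exact Hm).
    apply (is_RInt_derive (fun t => sin (INR m * t) / INR m)).
    + intros x _. auto_derive; [auto | field; exact Hm].
    + intros x _. apply continuous_of_ex_derive. intros y. auto_derive. auto.
Qed.

Lemma RInt_sin_sin k j : (1 <= j)%nat ->
  (RInt (fun t => sin (INR k * t) * sin (INR j * t)) 0 PI : R) = PI / 2 * kron k j.
Proof.
  intros Hj. set (d := if Nat.leb j k then (k - j)%nat else (j - k)%nat).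
  rewrite (RInt_ext_R _
     (fun t => / 2 * cos (INR d * t) + - / 2 * cos (INR (k + j) * t))).
  2: { intros t.
       assert (Ed : cos (INR d * t) = cos (INR k * t - INR j * t)).
       { unfold d. destruct (Nat.leb_spec j k);
           rewrite minus_INR by lia; [|rewrite <- cos_neg]; f_equal; ring. }
       rewrite Ed, plus_INR, Rmult_plus_distr_r, cos_minus, cos_plus. field. }
  rewrite RInt_lin by (intros; auto_derive; auto).
  rewrite !RInt_cos_INR. unfold d, kron.
  destruct (Nat.eqb_spec k j) as [->|Hkj].
  - rewrite Nat.leb_refl, Nat.sub_diag. simpl.
    destruct (Nat.eqb_spec (j + j) 0); [lia|]. field.
  - destruct (Nat.eqb_spec (k + j) 0); [lia|].
    destruct (Nat.leb_spec j k);
      [destruct (Nat.eqb_spec (k - j) 0) | destruct (Nat.eqb_spec (j - k) 0)]; try lia; ring.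
Qed.

Lemma RInt_cos_sin_sin k j : (1 <= j)%nat ->
  (RInt (fun t => cos (INR k * t) * sin t * sin (INR j * t)) 0 PI : R) =
  PI / 4 * (eps j * kron k (j - 1) - kron k (j + 1)).
Proof.
  intros Hj. unfold eps. destruct k as [|k].
  - rewrite (RInt_ext_R _ (fun t => sin (INR 1 * t) * sin (INR j * t))).
    2: { intros t. simpl. rewrite Rmult_0_l, cos_0, !Rmult_1_l. reflexivity. }
    rewrite RInt_sin_sin by exact Hj. unfold kron.
    destruct (Nat.eqb_spec 1 j), (Nat.eqb_spec j 1), (Nat.eqb_spec 0 (j - 1)),
      (Nat.eqb_spec 0 (j + 1)); try lia; field.
  - rewrite (RInt_ext_R _
      (fun t => / 2 * (sin (INR (S (S k)) * t) * sin (INR j * t))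
                + - / 2 * (sin (INR k * t) * sin (INR j * t)))).
    2: { intros t.
         replace (INR (S (S k)) * t) with (INR (S k) * t + t) by (rewrite !S_INR; ring).
         replace (INR k * t) with (INR (S k) * t - t) by (rewrite !S_INR; ring).
         rewrite sin_plus, sin_minus. field. }
    rewrite RInt_lin by (intros; auto_derive; auto).
    rewrite !RInt_sin_sin by exact Hj. unfold kron.
    destruct (Nat.eqb_spec j 1), (Nat.eqb_spec (S (S k)) j), (Nat.eqb_spec k j),
      (Nat.eqb_spec (S k) (j - 1)), (Nat.eqb_spec (S k) (j + 1)); try lia; field.
Qed.

Lemma RInt_dcheb_sum_sin_sin K c j : (1 <= j)%nat ->
  (RInt (fun t => dcheb_sum K c (cos t) * sin t * sin (INR j * t)) 0 PI : R) =
  PI / 2 * (INR j * trunc K c j).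
Proof.
  intros Hj.
  rewrite (RInt_ext_R _ (fun t => sum_f_R0 (fun k =>
             c k * (INR k * sin (INR k * t)) * sin (INR j * t)) K)).
  2: { intros t. unfold dcheb_sum. rewrite Rmult_assoc, Rmult_comm, scal_sum.
       apply sum_eq. intros k _. rewrite <- dcheb_cos_sin. ring. }
  assert (Hint : forall k, ex_RInt (fun t => c k * (INR k * sin (INR k * t)) * sin (INR j * t)) 0 PI).
  { intros k. apply ex_RInt_of_ex_derive. intros x. auto_derive. auto. }
  rewrite (is_RInt_unique _ _ _ _ (is_RInt_sum_f_R0 _ K 0 PI Hint)).
  rewrite (sum_eq _ (fun k => c k * INR k * (PI / 2) * kron k j)).
  - rewrite sum_kron. unfold trunc. destruct (Nat.leb j K); ring.
  - intros k _.
    rewrite (RInt_ext_R _ (fun t => c k * INR k * (sin (INR k * t) * sin (INR j * t))))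
      by (intros; ring).
    rewrite RInt_scal_R, RInt_sin_sin
      by (exact Hj || (apply ex_RInt_of_ex_derive; intros; auto_derive; auto)). unfold kron.
    destruct (Nat.eqb_spec k j); [subst|]; ring.
Qed.

Lemma RInt_cheb_sum_sin_sin L r j : (1 <= j)%nat ->
  (RInt (fun t => cheb_sum L r (cos t) * sin t * sin (INR j * t)) 0 PI : R) =
  PI / 4 * (eps j * trunc L r (j - 1) - trunc L r (j + 1)).
Proof.
  intros Hj.
  rewrite (RInt_ext_R _ (fun t => sum_f_R0 (fun k =>
             r k * (cos (INR k * t) * sin t * sin (INR j * t))) L)).
  2: { intros t. unfold cheb_sum. rewrite Rmult_assoc, Rmult_comm, scal_sum.
       apply sum_eq. intros k _. rewrite cheb_cos. ring. }
  assert (Hint : forall k, ex_RInt (fun t => r k * (cos (INR k * t) * sin t * sin (INR j * t))) 0 PI).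
  { intros k. apply ex_RInt_of_ex_derive. intros x. auto_derive. auto. }
  rewrite (is_RInt_unique _ _ _ _ (is_RInt_sum_f_R0 _ L 0 PI Hint)).
  rewrite (sum_eq _ (fun k => PI / 4 * eps j * r k * kron k (j - 1) - PI / 4 * r k * kron k (j + 1))).
  - rewrite minus_sum, !sum_kron, !trunc_scal. ring.
  - intros k _.
    rewrite RInt_scal_R, RInt_cos_sin_sin
      by (exact Hj || (apply ex_RInt_of_ex_derive; intros; auto_derive; auto)).
    ring.
Qed.

Lemma cos_interior t : 0 < t < PI -> -1 < cos t < 1.
Proof.
  intros Ht. rewrite <- cos_0, <- cos_PI.
  split; apply cos_decreasing_1; lra.
Qed.

Lemma dcheb_sum_coef K L c r :
  (forall y, -1 < y < 1 -> dcheb_sum K c y = cheb_sum L r y) ->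
  forall j, (1 <= j)%nat ->
  INR j * trunc K c j = (eps j * trunc L r (j - 1) - trunc L r (j + 1)) / 2.
Proof.
  intros Hcr j Hj.
  assert (E : (RInt (fun t => dcheb_sum K c (cos t) * sin t * sin (INR j * t)) 0 PI : R) =
              RInt (fun t => cheb_sum L r (cos t) * sin t * sin (INR j * t)) 0 PI).
  { apply RInt_ext. intros t Ht.
    rewrite Rmin_left, Rmax_right in Ht by (pose proof PI_RGT_0; lra).
    rewrite Hcr by (apply cos_interior, Ht). reflexivity. }
  rewrite RInt_dcheb_sum_sin_sin, RInt_cheb_sum_sin_sin in E by exact Hj.
  pose proof PI_RGT_0.
  apply (Rmult_eq_reg_l (PI / 2)); [|lra].
  rewrite E. field.
Qed.

Lemma continuous_reflect_mul (g h : R -> R) y x :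
  (forall x, continuous g x) -> (forall x, continuous h x) ->
  continuous (fun t => g (y - 1 - t) * h t) x.
Proof.
  intros Hg Hh. apply (@continuous_mult R_UniformSpace R_AbsRing); [|apply Hh].
  apply (continuous_comp (fun t => y - 1 - t) g); [|apply Hg].
  apply continuous_of_ex_derive. intros t. auto_derive. auto.
Qed.

Lemma ex_RInt_reflect_mul (g h : R -> R) y u v :
  (forall x, continuous g x) -> (forall x, continuous h x) ->
  ex_RInt (fun t => g (y - 1 - t) * h t) u v.
Proof.
  intros Hg Hh. apply (@ex_RInt_continuous R_CompleteNormedModule).
  intros x _. apply continuous_reflect_mul; assumption.
Qed.

Section Convolution.

Variables f df : R -> R.
Hypothesis f_deriv : forall x, is_derive f x (df x).
Hypothesis df_cont : forall x, continuous df x.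

Definition conv (h : R -> R) (y : R) : R := RInt (fun t => f (y - 1 - t) * h t) (-1) y.

Let f_cont x : continuous f x.
Proof. apply continuous_of_ex_derive. intros y. eexists. apply f_deriv. Qed.

Lemma conv_ext h1 h2 y : (forall t, h1 t = h2 t) -> conv h1 y = conv h2 y.
Proof. intros H. apply RInt_ext_R. intros t. rewrite H. reflexivity. Qed.

Lemma conv_lin h1 h2 al be y :
  (forall t, continuous h1 t) -> (forall t, continuous h2 t) ->
  conv (fun t => al * h1 t + be * h2 t) y = al * conv h1 y + be * conv h2 y.
Proof.
  intros C1 C2. apply (is_RInt_unique (V := R_CompleteNormedModule)).
  eapply is_RInt_ext.
  { intros t _. instantiate (1 := fun t => plus (scal al (f (y - 1 - t) * h1 t))
                                              (scal be (f (y - 1 - t) * h2 t))).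
    simpl. unfold plus, scal; simpl; unfold mult; simpl. ring. }
  apply (is_RInt_plus (V := R_NormedModule));
    apply (is_RInt_scal (V := R_NormedModule)), (RInt_correct (V := R_CompleteNormedModule));
    apply ex_RInt_reflect_mul; assumption.
Qed.

Lemma conv_const0 y : conv (fun _ => 0) y = 0.
Proof.
  unfold conv. rewrite (RInt_ext_R _ (fun _ => 0)) by (intros; ring).
  rewrite (RInt_const (V := R_CompleteNormedModule)).
  unfold scal; simpl; unfold mult; simpl. ring.
Qed.

Lemma is_derive_reflect_mul (h : R -> R) u t :
  is_derive (fun z => f (z - 1 - t) * h t) u (df (u - 1 - t) * h t).
Proof.
  apply (is_derive_ext (fun z => h t * f (z - 1 - t))); [intros; apply Rmult_comm|].
  rewrite Rmult_comm. apply is_derive_scal.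
  replace (df (u - 1 - t)) with (scal 1 (df (u - 1 - t)))
    by (unfold scal; simpl; unfold mult; simpl; ring).
  apply (is_derive_comp f (fun z => z - 1 - t)); [apply f_deriv|].
  auto_derive; [auto | ring].
Qed.

Lemma is_derive_conv_param h y : (forall t, continuous h t) ->
  is_derive (conv h) y (RInt (fun t => df (y - 1 - t) * h t) (-1) y + f (-1) * h y).
Proof.
  intros Hh.
  assert (HD : forall u t, Derive (fun z => f (z - 1 - t) * h t) u = df (u - 1 - t) * h t).
  { intros u t. apply is_derive_unique, is_derive_reflect_mul. }
  assert (H2d : forall u t,
    continuity_2d_pt (fun u v => Derive (fun z => f (z - 1 - v) * h v) u) u t).
  { intros u t. apply (continuity_2d_pt_ext (fun u v => df (u - 1 - v) * h v)).
    { intros; symmetry; apply HD. }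
    apply continuity_2d_pt_mult.
    - apply (continuity_1d_2d_pt_comp df (fun u v => u - 1 - v)).
      + apply continuity_pt_filterlim, df_cont.
      + apply continuity_2d_pt_minus; [apply continuity_2d_pt_minus|].
        * apply continuity_2d_pt_id1.
        * apply continuity_2d_pt_const.
        * apply continuity_2d_pt_id2.
    - apply (continuity_1d_2d_pt_comp h (fun u v => v)).
      + apply continuity_pt_filterlim, Hh.
      + apply continuity_2d_pt_id2. }
  pose proof (is_derive_RInt_param_bound_comp_aux3 (fun u t => f (u - 1 - t) * h t) (-1)
     (fun y => y) y 1) as H.
  unfold conv. rewrite (RInt_ext_R _ _ _ _ (HD y)) in H.
  replace (y - 1 - y) with (-1) in H by ring. rewrite Rmult_1_r in H.
  apply H; clear H.
  - apply filter_forall. intros; apply ex_RInt_reflect_mul; auto.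
  - exists (mkposreal 1 Rlt_0_1). apply filter_forall. intros; apply ex_RInt_reflect_mul; auto.
  - apply (@is_derive_id R_AbsRing).
  - exists (mkposreal 1 Rlt_0_1). apply filter_forall. intros u t _.
    eexists. apply is_derive_reflect_mul.
  - intros; apply H2d.
  - exists (mkposreal 1 Rlt_0_1). intros; apply H2d.
  - apply continuity_pt_filterlim, continuous_reflect_mul; auto.
Qed.

Lemma is_derive_reflect y t : is_derive (fun t => f (y - 1 - t)) t (- df (y - 1 - t)).
Proof.
  replace (- df (y - 1 - t)) with (scal (-1) (df (y - 1 - t)))
    by (unfold scal; simpl; unfold mult; simpl; ring).
  apply (is_derive_comp f (fun t => y - 1 - t)); [apply f_deriv|].
  auto_derive; [auto | ring].
Qed.

Lemma RInt_reflect_by_parts h dh y :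
  (forall t, is_derive h t (dh t)) -> (forall t, continuous dh t) ->
  (RInt (fun t => df (y - 1 - t) * h t) (-1) y : R) =
  - f (-1) * h y + f y * h (-1) + conv dh y.
Proof.
  intros Hh Cdh.
  assert (Ch : forall t, continuous h t).
  { intros t. apply continuous_of_ex_derive. intros x. eexists. apply Hh. }
  assert (HD : forall t, is_derive (fun t => - (f (y - 1 - t) * h t)) t
                           (df (y - 1 - t) * h t - f (y - 1 - t) * dh t)).
  { intros t.
    pose proof (is_derive_opp _ _ _
      (is_derive_mult _ _ t _ _ (is_derive_reflect y t) (Hh t) Rmult_comm)) as H.
    eapply is_derive_ext; [intros; reflexivity|].
    replace (df (y - 1 - t) * h t - f (y - 1 - t) * dh t) with
      (opp (plus (mult (- df (y - 1 - t)) (h t)) (mult (f (y - 1 - t)) (dh t))))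
      by (unfold opp, plus, mult; simpl; ring).
    exact H. }
  assert (HI := is_RInt_derive _ _ (-1) y (fun t _ => HD t)
    (fun t _ => @continuous_minus R_UniformSpace R_AbsRing R_NormedModule _ _ t
                  (continuous_reflect_mul df h y t df_cont Ch)
                  (continuous_reflect_mul f dh y t f_cont Cdh))).
  apply (is_RInt_unique (V := R_CompleteNormedModule)) in HI.
  rewrite (RInt_minus (V := R_CompleteNormedModule)) in HI
    by (apply ex_RInt_reflect_mul; auto).
  unfold conv. unfold minus, plus, opp in HI; simpl in HI.
  replace (y - 1 - y) with (-1) in HI by ring.
  replace (y - 1 - -1) with y in HI by ring.
  lra.
Qed.

Lemma is_derive_conv h dh y :
  (forall t, is_derive h t (dh t)) -> (forall t, continuous dh t) ->
  is_derive (conv h) y (f y * h (-1) + conv dh y).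
Proof.
  intros Hh Cdh.
  assert (Ch : forall t, continuous h t).
  { intros t. apply continuous_of_ex_derive. intros x. eexists. apply Hh. }
  pose proof (is_derive_conv_param h y Ch) as H.
  rewrite (RInt_reflect_by_parts h dh y Hh Cdh) in H.
  replace (f y * h (-1) + conv dh y)
    with (- f (-1) * h y + f y * h (-1) + conv dh y + f (-1) * h y) by ring.
  exact H.
Qed.

End Convolution.

Lemma fM_cheb_sum M a x : -1 <= x <= 1 -> fM M a x = cheb_sum M a x.
Proof.
  intros Hx. apply sum_eq. intros m _. rewrite T_cheb by exact Hx. reflexivity.
Qed.

Lemma Rtilde_conv M a n y : -1 <= y <= 1 -> Rtilde M a n y = conv (cheb_sum M a) (cheb n) y.
Proof.
  intros Hy. apply RInt_ext. intros t Ht.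
  rewrite Rmin_left, Rmax_right in Ht by lra.
  rewrite fM_cheb_sum, T_cheb by lra. reflexivity.
Qed.

Section Coefficients.

Variables (M N : nat) (a : nat -> R) (Rc : nat -> nat -> R).
Hypothesis HR : forall n : nat, (n <= N)%nat -> forall y : R, -1 <= y <= 1 ->
  Rtilde M a n y = sum_f_R0 (fun k => Rc k n * T k y) (M + N + 1).

Local Notation L := (M + N + 1)%nat.
Local Notation Rcol n := (fun k => Rc k n).
Local Notation conv_f := (conv (cheb_sum M a)).

Lemma conv_cheb_Rcol n y : (n <= N)%nat -> -1 <= y <= 1 ->
  conv_f (cheb n) y = cheb_sum L (Rcol n) y.
Proof.
  intros Hn Hy. rewrite <- Rtilde_conv, HR by assumption.
  apply sum_eq. intros k _. rewrite T_cheb by exact Hy. reflexivity.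
Qed.

Lemma dcheb_sum_Rcol n y : (n <= N)%nat -> -1 < y < 1 ->
  dcheb_sum L (Rcol n) y = cheb_sum M a y * (-1) ^ n + conv_f (dcheb n) y.
Proof.
  intros Hn Hy.
  rewrite <- (is_derive_unique _ _ _ (is_derive_cheb_sum L (Rcol n) y)).
  apply is_derive_unique.
  apply (is_derive_ext_loc (conv_f (cheb n))).
  - apply (locally_interval _ y (-1) 1); simpl; try lra.
    intros z Hz1 Hz2. apply conv_cheb_Rcol; [exact Hn | lra].
  - rewrite <- (cheb_m1 n).
    apply (is_derive_conv _ (dcheb_sum M a)); [apply is_derive_cheb_sum | apply continuous_dcheb_sum |
                           apply is_derive_cheb | apply continuous_dcheb].
Qed.

Lemma dcheb_sum_Rcol0 y : -1 < y < 1 -> dcheb_sum L (Rcol 0) y = cheb_sum M a y.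
Proof.
  intros Hy. rewrite dcheb_sum_Rcol by (lia || assumption).
  rewrite (conv_ext _ _ (fun _ => 0)) by apply dcheb_0.
  rewrite conv_const0. simpl. ring.
Qed.

Lemma Rc_col0 j : (1 <= j <= L)%nat ->
  Rc j 0 = (eps j * trunc M a (j - 1) - trunc M a (j + 1)) / (2 * INR j).
Proof.
  intros Hj. assert (Hj0 : INR j <> 0) by (apply not_0_INR; lia).
  pose proof (dcheb_sum_coef _ _ _ _ dcheb_sum_Rcol0 j (proj1 Hj)) as H.
  rewrite trunc_le in H by apply Hj.
  apply (Rmult_eq_reg_l (INR j)); [|exact Hj0].
  rewrite H. field. exact Hj0.
Qed.

Lemma Rc_succ n m al be : (S n <= N)%nat -> (m <= N)%nat ->
  (forall t, dcheb (S n) t = al * dcheb m t + be * cheb n t) ->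
  forall j, (1 <= j <= L)%nat ->
  Rc j (S n) = - ((-1) ^ n + al * (-1) ^ m) * Rc j 0 + al * Rc j m
               + be / (2 * INR j) * (eps j * trunc L (Rcol n) (j - 1) - trunc L (Rcol n) (j + 1)).
Proof.
  intros Hn Hm Hrel j Hj. assert (Hj0 : INR j <> 0) by (apply not_0_INR; lia).
  set (c0 := (-1) ^ n + al * (-1) ^ m).
  assert (Hid : forall y, -1 < y < 1 ->
    dcheb_sum L (fun k => Rc k (S n) + c0 * Rc k 0 + - al * Rc k m) y =
    cheb_sum L (fun k => be * Rc k n) y).
  { intros y Hy.
    rewrite !dcheb_sum_plus_scal, cheb_sum_scal, dcheb_sum_Rcol0 by exact Hy.
    rewrite !dcheb_sum_Rcol by (lia || assumption).
    rewrite (conv_ext _ _ _ _ Hrel), (conv_lin _ _ (is_derive_cheb_sum M a)), conv_cheb_Rcol by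
      (lia || lra || apply continuous_dcheb || apply continuous_cheb).
    unfold c0. simpl. ring. }
  pose proof (dcheb_sum_coef _ _ _ _ Hid j (proj1 Hj)) as H.
  rewrite trunc_le in H by apply Hj. rewrite !trunc_scal in H.
  replace (Rc j (S n)) with
    (INR j * (Rc j (S n) + c0 * Rc j 0 + - al * Rc j m) / INR j - c0 * Rc j 0 + al * Rc j m)
    by (field; exact Hj0).
  rewrite H. unfold c0. field. exact Hj0.
Qed.

Lemma Rc_vanish n : (n <= N)%nat -> forall k, (M + n + 1 < k <= L)%nat -> Rc k n = 0.
Proof.
  induction n as [|n IH] using Nat.strong_induction_le; intros Hn k Hk.
  - rewrite Rc_col0 by lia. rewrite !trunc_zero by (intros; lia). unfold Rdiv. ring.
  - destruct (dcheb_succ_ex n) as (m & al & be & Hm & Hrel).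
    rewrite (Rc_succ n m al be) by (lia || assumption).
    rewrite (IH 0%nat), (IH m) by lia.
    rewrite !trunc_zero by (intros; apply IH; lia). unfold Rdiv. ring.
Qed.

Lemma Rcol_alternating_sum n : (n <= N)%nat ->
  sum_f_R0 (fun k => Rc k n * (-1) ^ k) (M + n + 1) = 0.
Proof.
  intros Hn.
  assert (H : cheb_sum L (Rcol n) (-1) = 0).
  { rewrite <- conv_cheb_Rcol by (assumption || lra).
    apply (RInt_point (V := R_CompleteNormedModule)). }
  unfold cheb_sum in H. replace L with (M + n + 1 + (N - n))%nat in H by lia.
  rewrite sum_f_R0_trunc in H.
  - rewrite <- H. apply sum_eq. intros k _. rewrite cheb_m1. reflexivity.
  - intros i Hi. rewrite Rc_vanish by lia. ring.
Qed.

End Coefficients.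

Theorem theorem3p3 (M N : nat) (a : nat -> R) (Rc : nat -> nat -> R)
  (HR : forall n : nat, (n <= N)%nat ->
        forall y : R, -1 <= y <= 1 ->
        Rtilde M a n y = sum_f_R0 (fun k => Rc k n * T k y) (M + N + 1))
  (Hlast : forall n : nat, (n <= N)%nat -> Rc (M + N + 2)%nat n = 0) :
  (forall k : nat, (1 <= k <= M + N)%nat ->
     ((1 <= N)%nat ->
        Rc k 1%nat = - Rc k 0%nat + eps k / (2 * INR k) * Rc (k - 1)%nat 0%nat
                     - 1 / (2 * INR k) * Rc (k + 1)%nat 0%nat) /\
     ((2 <= N)%nat ->
        Rc k 2%nat = Rc k 0%nat + 2 * eps k / INR k * Rc (k - 1)%nat 1%nat
                     - 2 / INR k * Rc (k + 1)%nat 1%nat) /\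
     (forall n : nat, (2 <= n <= N - 1)%nat ->
        Rc k (n + 1)%nat =
          2 * (-1) ^ n / (INR n - 1) * Rc k 0%nat
          + (INR n + 1) / (INR n - 1) * Rc k (n - 1)%nat
          + eps k * (INR n + 1) / INR k * Rc (k - 1)%nat n
          - (INR n + 1) / INR k * Rc (k + 1)%nat n)) /\
  (forall n : nat, (1 <= n <= N)%nat ->
     Rc 0%nat n = sum_f_R0 (fun i => (-1) ^ (i + 2) * Rc (i + 1)%nat n) (M + n)).
Proof.
  split.
  - intros k Hk. assert (Hk0 : INR k <> 0) by (apply not_0_INR; lia).
    split; [|split].
    + intros HN. rewrite (Rc_succ M N a Rc HR 0 0 0 1) by (lia || (intros; rewrite dcheb_1; ring)).
      rewrite !trunc_le by lia. simpl. field. exact Hk0.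
    + intros HN. rewrite (Rc_succ M N a Rc HR 1 0 0 4) by (lia || (intros; rewrite dcheb_2; ring)).
      rewrite !trunc_le by lia. simpl. field. exact Hk0.
    + intros n Hn.
      assert (Hn1 : INR n - 1 <> 0) by (apply Rminus_eq_contra, not_1_INR; lia).
      assert (Hpow : (-1) ^ n = - (-1) ^ (n - 1))
        by (replace n with (S (n - 1)) at 1 by lia; simpl; ring).
      rewrite Nat.add_1_r, (Rc_succ M N a Rc HR n (n - 1) _ _)
        by (lia || (intros; apply dcheb_succ; lia)).
      rewrite !trunc_le, Hpow by lia. field. split; assumption.
  - intros n Hn.
    pose proof (Rcol_alternating_sum M N a Rc HR n (proj2 Hn)) as H.
    rewrite decomp_sum in H by lia.
    replace (Init.Nat.pred (M + n + 1)) with (M + n)%nat in H by lia.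
    rewrite (sum_eq _ (fun i => Rc (S i) n * (-1) ^ S i * -1)).
    + rewrite <- scal_sum. rewrite pow_O in H. lra.
    + intros i _. replace (i + 2)%nat with (S (S i)) by lia.
      rewrite Nat.add_1_r. simpl. ring.
Qed.
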